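(* For every natural number $k$ there is a finite set $\mathcal{F}_k$ of graphs such that a graph is $k$-modular if and only if it contains no member of $\mathcal{F}_k$ as an induced subgraph.
   Context: A module of a graph $G=(V,E)$ is a set $M\subseteq V$ such that every vertex outside $M$ is adjacent either to all vertices of $M$ or to none of them. A module is strong if it does not overlap (intersect without containment either way) any other module. The strong modules ordered by inclusion form the modular decomposition tree of $G$: its leaves are the single vertices, and each internal node $N$ (a strong module with at least two vertices) has as children its maximal proper strong submodules $M_1,\ldots,M_m$; the quotient graph $H_N$ has vertex set $\{M_1,\ldots,M_m\}$ with $M_i\sim M_j$ iff all edges between $M_i$ and $M_j$ are present. $N$ is a union node if $H_N$ is edgeless, a join node if $H_N$ is complete, and a prime node otherwise. A graph is $k$-modular if for every prime node $N$ of its modular decomposition tree the quotient graph $H_N$ has at most $k$ vertices. (The $0$-modular graphs are exactly the cographs.) *)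

From mathcomp Require Import all_boot.
Set Implicit Arguments. Unset Strict Implicit. Unset Printing Implicit Defensive.

Definition simple_graph (T : finType) (e : rel T) : Prop :=
  symmetric e /\ irreflexive e.

Section Modular.
Variables (T : finType) (e : rel T).

Definition module (M : {set T}) : bool :=
  [forall x, (x \notin M) ==>
     ([forall y in M, e x y] || [forall y in M, ~~ e x y])].

Definition overlap (A B : {set T}) : bool :=
  [&& A :&: B != set0, ~~ (A \subset B) & ~~ (B \subset A)].

Definition strong (M : {set T}) : bool :=
  module M && [forall M' : {set T}, module M' ==> ~~ overlap M M'].

(* children of N in the modular decomposition tree: the maximal proper
   strong submodules of N *)
Definition mchild (N M : {set T}) : bool :=
  [&& strong M, M \proper N &
      [forall M' : {set T}, (strong M' && (M' \proper N) && (M \subset M'))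
                              ==> (M' == M)]].

Definition children (N : {set T}) : {set {set T}} := [set M | mchild N M].

Definition qadj (M1 M2 : {set T}) : bool :=
  [forall x in M1, forall y in M2, e x y].

Definition quotient_edgeless (N : {set T}) : bool :=
  [forall M1 in children N, forall M2 in children N,
     (M1 != M2) ==> ~~ qadj M1 M2].

Definition quotient_complete (N : {set T}) : bool :=
  [forall M1 in children N, forall M2 in children N,
     (M1 != M2) ==> qadj M1 M2].

(* prime node: an internal node (strong module with >= 2 vertices) that is
   neither a union node nor a join node *)
Definition prime_node (N : {set T}) : bool :=
  [&& strong N, 1 < #|N|, ~~ quotient_edgeless N & ~~ quotient_complete N].

Definition k_modular (k : nat) : Prop :=
  forall N : {set T}, prime_node N -> #|children N| <= k.

End Modular.

Record sgraph := FGraph { fg_n : nat; fg_e : rel 'I_fg_n }.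

Definition sgraph_simple (H : sgraph) : Prop := simple_graph (@fg_e H).

Definition contains_induced (H : sgraph) (T : finType) (e : rel T) : Prop :=
  exists f : 'I_(fg_n H) -> T,
    injective f /\ forall x y, @fg_e H x y = e (f x) (f y).

(* Call a vertex set X of a graph G prime if |X| >= 3 and the induced subgraph
   G[X] has no module with two vertices other than X itself.  Every prime set contains a prime set
      of at most four vertices, namely an induced P4, by a Seinsche-type
      dichotomy ([cut_or_P4]: a vertex set has a homogeneous cut or an induced
      P4).  A prime set Z strictly inside a prime set W extends to a prime set
      of W with one or two more vertices ([prime_grows], in the style of
      Schmerl and Trotter).  Hence a prime set with more than k vertices
      contains one with between k + 1 and k + 4 vertices ([prime_shrink]).  G is k-modular iff every
      prime set of G has at most k vertices ([k_modular_prime]): the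
      representatives of the children of a prime node form a prime set (by
      the overlap criterion), and a prime set X lies in the least strong
      module containing X, a prime node whose children separate X.
   3. The forbidden family consists of all prime graphs on k + 1 .. k + 4
      vertices, coded by adjacency matrices; primality is preserved and
      reflected by induced embeddings ([prime_embed], [prime_embed_inv]). *)

From mathcomp Require Import all_boot.
From mathcomp Require Import zify.
Set Implicit Arguments. Unset Strict Implicit. Unset Printing Implicit Defensive.

Lemma neq_negb (b t : bool) : b != t -> b = ~~ t.
Proof. by case: b; case: t. Qed.

Lemma card3 (T : finType) (x y z : T) : x != y -> x != z -> y != z -> 2 < #|[set x; y; z]|.
Proof.
move=> xy xz yz; rewrite -setUA !cardsU1 cards1 !inE negb_or.
by rewrite xy xz yz.
Qed.

Section PrimeSets.
Variables (T : finType) (e : rel T).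
Hypothesis esym : symmetric e.
Implicit Types W P S M Y Z A B C X V : {set T}.

Definition rmodule (W M : {set T}) : bool :=
  (M \subset W) && [forall x in W :\: M, forall y in M, forall z in M, e x y == e x z].

Definition prime_set (W : {set T}) : bool :=
  (2 < #|W|) && [forall M : {set T}, rmodule W M ==>
     [forall a in M, forall b in M, (a != b) ==> (W \subset M)]].

Lemma rmoduleP W M : reflect (M \subset W /\ forall x y z, x \in W -> x \notin M ->
   y \in M -> z \in M -> e x y = e x z) (rmodule W M).
Proof.
apply: (iffP andP) => [[H1 /forallP H2]|[H1 H2]]; split => //.
  move=> x y z xW xM yM zM; have := H2 x; rewrite inE xM xW /=.
  by move=> /forallP/(_ y); rewrite yM => /forallP/(_ z); rewrite zM => /eqP.
apply/forallP => x; apply/implyP; rewrite inE => /andP[xM xW].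
apply/forallP => y; apply/implyP => yM; apply/forallP => z; apply/implyP => zM.
by apply/eqP; apply: H2.
Qed.

Lemma prime_setP W : reflect (2 < #|W| /\ forall M, rmodule W M -> forall a b,
   a \in M -> b \in M -> a != b -> W \subset M) (prime_set W).
Proof.
apply: (iffP andP) => [[H1 /forallP H2]|[H1 H2]]; split => //.
  move=> M HM a b aM bM ab; have := H2 M; rewrite HM /=.
  by move=> /forallP/(_ a); rewrite aM => /forallP/(_ b); rewrite bM ab.
apply/forallP => M; apply/implyP => HM.
apply/forallP => a; apply/implyP => aM; apply/forallP => b; apply/implyP => bM.
by apply/implyP; apply: H2.
Qed.

Lemma rmodule_trace W V M : rmodule W M -> V \subset W -> rmodule V (M :&: V).
Proof.
move=> /rmoduleP[MW HM] VW; apply/rmoduleP; split; first exact: subsetIr.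
move=> x y z xV; rewrite !inE xV andbT => xM /andP[yM _] /andP[zM _].
by apply: HM => //; apply: (subsetP VW).
Qed.

Lemma rmoduleU W A B : rmodule W A -> rmodule W B -> A :&: B != set0 ->
  rmodule W (A :|: B).
Proof.
move=> /rmoduleP[AW HA] /rmoduleP[BW HB] /set0Pn[c]; rewrite inE => /andP[cA cB].
apply/rmoduleP; split; first by rewrite subUset AW BW.
move=> x y z xW; rewrite !inE negb_or => /andP[xA xB].
have Hy w : w \in A :|: B -> e x w = e x c.
  by rewrite inE => /orP[wA|wB]; [exact: HA | exact: HB].
by move=> yU zU; rewrite (Hy y) ?inE ?yU // (Hy z) ?inE ?zU.
Qed.

Lemma rmoduleD W A B : rmodule W A -> rmodule W B -> A :\: B != set0 ->
  rmodule W (B :\: A).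
Proof.
move=> /rmoduleP[AW HA] /rmoduleP[BW HB] /set0Pn[w]; rewrite inE => /andP[wB wA].
apply/rmoduleP; split; first by apply: subset_trans BW; apply: subsetDl.
move=> x y z xW; rewrite !inE negb_and negbK => xBA /andP[yA yB] /andP[zA zB].
case: (boolP (x \in B)) => xB; last exact: HB.
have xA : x \in A by move: xBA; rewrite xB orbF.
have E u : u \in B -> u \notin A -> e x u = e w y.
  move=> uB uA; rewrite esym (HA u x w) ?(subsetP BW) //.
  by rewrite esym (HB w u y) ?(subsetP AW).
by rewrite (E y) // (E z).
Qed.

Lemma not_rmodule W C : C \subset W -> ~~ rmodule W C ->
  exists p a b, [/\ p \in W, p \notin C, a \in C, b \in C & e p a != e p b].
Proof.
move=> CW; rewrite /rmodule CW /= negb_forall => /existsP[p].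
rewrite negb_imply inE => /andP[/andP[pC pW]].
rewrite negb_forall => /existsP[a]; rewrite negb_imply => /andP[aC].
rewrite negb_forall => /existsP[b]; rewrite negb_imply => /andP[bC pab].
by exists p, a, b.
Qed.

Lemma prime_trace_small Z M : prime_set Z -> rmodule Z (M :&: Z) -> ~~ (Z \subset M) ->
  forall p q, p \in M -> q \in M -> p \in Z -> q \in Z -> p = q.
Proof.
case/prime_setP => _ HZ mMZ ZM p q pM qM pZ qZ; apply/eqP/negPn/negP => pq.
have := HZ _ mMZ p q; rewrite !inE pM qM pZ qZ => /(_ isT isT pq) H.
by move: ZM; rewrite (subset_trans H) // subsetIl.
Qed.

Lemma prime_no_dominated Z x c : prime_set Z -> x \in Z ->
  (forall z, z \in Z -> z != x -> e z x = c) -> False.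
Proof.
case/prime_setP => cZ HZ xZ H.
have mM : rmodule Z (Z :\ x).
  apply/rmoduleP; split; first exact: subsetDl.
  move=> p y z pZ; rewrite !inE pZ andbT negbK => /eqP Ep /andP[yx yZ] /andP[zx zZ].
  by rewrite Ep esym H // esym H.
have : 1 < #|Z :\ x| by move: cZ; rewrite (cardsD1 x Z) xZ.
case/card_gt1P => p [q [pM qM pq]].
by move: (subsetP (HZ _ mM p q pM qM pq) x xZ); rewrite !inE eqxx.
Qed.

Lemma prime_no_twins Z x y : prime_set Z -> x \in Z -> y \in Z -> x != y ->
  (forall z, z \in Z -> z != x -> z != y -> e z x = e z y) -> False.
Proof.
case/prime_setP => cZ HZ xZ yZ xy H.
have mM : rmodule Z [set x; y].
  apply/rmoduleP; split; first by apply/subsetP => z; rewrite !inE => /orP[] /eqP->.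
  move=> p a b pZ; rewrite !inE negb_or => /andP[px py].
  have Hp := H p pZ px py.
  by move=> /orP[] /eqP-> /orP[] /eqP->.
have := HZ _ mM x y; rewrite !inE !eqxx orbT => /(_ isT isT xy) /subset_leq_card.
by rewrite cards2 xy => c; move: cZ; rewrite ltnNge (leq_trans c).
Qed.


(* P is a homogeneous cut of W with value t: a nonempty proper part of W such
   that e p q = t for all p in P and q in W \ P (for t = false, G[W] is
   disconnected along P; for t = true, its complement is). *)
Definition hcut (W : {set T}) (t : bool) (P : {set T}) : bool :=
  [&& P \subset W, P != set0, ~~ (W \subset P) &
      [forall p in P, forall q in W :\: P, e p q == t]].

Lemma hcutP W t P : reflect ([/\ P \subset W, P != set0, ~~ (W \subset P) &
   forall p q, p \in P -> q \in W -> q \notin P -> e p q = t]) (hcut W t P).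
Proof.
apply: (iffP and4P) => [[H1 H2 H3 /forallP H4]|[H1 H2 H3 H4]]; split => //.
  move=> p q pP qW qP; have := H4 p; rewrite pP /= => /forallP/(_ q).
  by rewrite inE qW qP => /eqP.
apply/forallP => p; apply/implyP => pP; apply/forallP => q; apply/implyP.
by rewrite inE => /andP[qP qW]; apply/eqP; apply: H4.
Qed.

Lemma hcutC W t P : hcut W t P -> hcut W t (W :\: P).
Proof.
case/hcutP => PW P0 WP H; apply/hcutP; split.
- exact: subsetDl.
- by apply/set0Pn; case/subsetPn: WP => x xW xP; exists x; rewrite inE xP.
- by case/set0Pn: P0 => x xP; apply/subsetPn; exists x; rewrite ?inE ?xP // (subsetP PW).
- move=> p q; rewrite !inE => /andP[pP pW] qW; rewrite qW andbT negbK => qP.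
  by rewrite esym; apply: H.
Qed.

Lemma hcut_rmodule W t P : hcut W t P -> rmodule W P.
Proof.
case/hcutP => PW _ _ H; apply/rmoduleP; split => // x y z xW xP yP zP.
by rewrite esym (H y x) // esym (H z x).
Qed.

(* A prime set has no homogeneous cut: the cut or its complement would be a
   module with two vertices. *)
Lemma prime_no_hcut W t P : prime_set W -> hcut W t P -> False.
Proof.
case/prime_setP => cW HW sP; have [PW Pn0 WP H] := hcutP _ _ _ sP.
case: (ltnP 1 #|P|) => cP.
  case/card_gt1P: cP => x [y [xP yP xy]].
  by move: WP; rewrite (HW P (hcut_rmodule sP) x y xP yP xy).
have sQ := hcutC sP.
have : 1 < #|W :\: P| by rewrite cardsD; have := subset_leq_card (subsetIr W P); lia.
case/card_gt1P => x [y [xQ yQ xy]].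
have := HW _ (hcut_rmodule sQ) x y xQ yQ xy.
case/set0Pn: Pn0 => p pP => /subsetP/(_ p (subsetP PW p pP)).
by rewrite inE pP.
Qed.

Lemma prime_has_pair W t : prime_set W ->
  exists x y, [/\ x \in W, y \in W, x != y & e x y = ~~ t].
Proof.
move=> pW; case/prime_setP: (pW) => cW _.
have [a aW] : exists a, a \in W by apply/set0Pn; rewrite -card_gt0; apply: ltnW (ltnW cW).
case: (boolP [forall y in W :\ a, e a y == t]) => H.
  exfalso; apply: (prime_no_hcut (t := t) (P := [set a]) pW); apply/hcutP; split.
  - by rewrite sub1set.
  - by apply/set0Pn; exists a; rewrite inE.
  - apply/negP => /subset_leq_card; rewrite cards1 => c; move: cW.
    by rewrite ltnNge (leq_trans c).
  - move=> p q; rewrite inE => /eqP-> qW; rewrite inE => qa.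
    by have := forallP H q; rewrite !inE qa qW => /eqP.
move: H; rewrite negb_forall => /existsP[y]; rewrite negb_imply => /andP[].
rewrite !inE => /andP[ya yW] ay; exists a, y; split => //; first by rewrite eq_sym.
exact: neq_negb.
Qed.

Definition overlap_property (W : {set T}) := forall Y a b, rmodule W Y ->
  a \in Y -> b \in Y -> a != b -> ~~ (W \subset Y) ->
  exists Y', rmodule W Y' /\ overlap Y Y'.

Lemma hcut_split W t P Y : hcut W t P -> rmodule W Y -> overlap P Y ->
  hcut W t (P :&: Y) /\ hcut W t (P :\: Y).
Proof.
move=> sP mY /and3P[/set0Pn[u] + /subsetPn[v vP vY] /subsetPn[w wY wP]].
rewrite inE => /andP[uP uY].
have [PW _ _ H] := hcutP _ _ _ sP; have [YW HY] := rmoduleP _ _ mY.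
have wW : w \in W by apply: (subsetP YW).
have Hv v' y' : v' \in P -> v' \notin Y -> y' \in Y -> e v' y' = t.
  by move=> v'P v'Y y'Y; rewrite (HY v' y' w) ?(subsetP PW) //; apply: H.
split; apply/hcutP; split.
- by apply: subset_trans PW; apply: subsetIl.
- by apply/set0Pn; exists u; rewrite inE uP.
- by apply/subsetPn; exists v; rewrite ?(subsetP PW) // inE (negbTE vY) andbF.
- move=> p q; rewrite !inE => /andP[pP pY] qW; rewrite negb_and.
  case: (boolP (q \in P)) => qP /=; last by move=> _; apply: H.
  by move=> qY; rewrite esym; apply: Hv.
- by apply: subset_trans PW; apply: subsetDl.
- by apply/set0Pn; exists v; rewrite inE vY.
- by apply/subsetPn; exists u; rewrite ?(subsetP PW) // inE uY.
- move=> p q; rewrite !inE => /andP[pY pP] qW; rewrite negb_and negbK.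
  case: (boolP (q \in P)) => qP /=; last by move=> _; apply: H.
  by rewrite orbF => qY; apply: Hv.
Qed.

(* Under the overlap property, a homogeneous cut with value t forces all pairs
   of W to have value t: a minimal cut through x is the singleton {x}, since a
   larger one would be split by an overlapping module. *)
Lemma hcut_uniform W t P0 : overlap_property W -> hcut W t P0 ->
  forall x y, x \in W -> y \in W -> x != y -> e x y = t.
Proof.
move=> OV sP0 x y xW yW xy.
have [P1 sP1 xP1] : exists2 P, hcut W t P & x \in P.
  case: (boolP (x \in P0)) => xP0; first by exists P0.
  by exists (W :\: P0); [apply: hcutC | rewrite inE xP0].
case: (arg_minnP (fun P => #|P|) (i0 := P1) (P := fun P => hcut W t P && (x \in P))).
  by rewrite sP1.
move=> P /andP[sP xP] Pmin; have [PW _ WP H] := hcutP _ _ _ sP.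
case: (boolP (y \in P)) => yP; last exact: H.
have [Y [mY ovY]] := OV P x y (hcut_rmodule sP) xP yP xy WP.
have [sI sD] := hcut_split sP mY ovY.
case/and3P: ovY => /set0Pn[u] + /subsetPn[v vP vY] _; rewrite inE => /andP[uP uY].
have ltI : #|P :&: Y| < #|P|.
  apply: proper_card; apply/properP; split; first exact: subsetIl.
  by exists v => //; rewrite inE (negbTE vY) andbF.
have ltD : #|P :\: Y| < #|P|.
  apply: proper_card; apply/properP; split; first exact: subsetDl.
  by exists u => //; rewrite inE uY.
case: (boolP (x \in Y)) => xY.
  by have := Pmin (P :&: Y); rewrite sI inE xP xY leqNgt ltI => /(_ isT).
by have := Pmin (P :\: Y); rewrite sD inE xP xY leqNgt ltD => /(_ isT).
Qed.

(* A maximal such module M together with an overlapping module covers W, which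
   makes M a homogeneous cut. *)
Lemma overlap_uniform W S a b : overlap_property W -> rmodule W S ->
  a \in S -> b \in S -> a != b -> ~~ (W \subset S) ->
  exists t, forall x y, x \in W -> y \in W -> x != y -> e x y = t.
Proof.
move=> OV mS aS bS ab WS.
case: (arg_maxnP (fun M => #|M|) (i0 := S)
   (P := fun M => [&& rmodule W M, S \subset M & ~~ (W \subset M)])).
  by rewrite mS subxx WS.
move=> M /and3P[mM SM WM] Mmax.
have aM := subsetP SM a aS; have bM := subsetP SM b bS.
have [M' [mM' /and3P[I0 nMM' nM'M]]] := OV M a b mM aM bM ab WM.
have [MW HM] := rmoduleP _ _ mM.
have UW : W \subset M :|: M'.
  apply/negPn/negP => WU.
  have := Mmax (M :|: M'); rewrite rmoduleU // WU (subset_trans SM (subsetUl _ _)) /=.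
  move=> /(_ isT); rewrite leqNgt; apply/negP/negPn.
  apply: proper_card; apply/properP; split; first exact: subsetUl.
  by case/subsetPn: nM'M => w wM' wM; exists w; rewrite // inE wM' orbT.
have mD : rmodule W (M' :\: M).
  apply: rmoduleD => //.
  by case/subsetPn: nMM' => w wM wM'; apply/set0Pn; exists w; rewrite inE wM wM'.
have [_ HD] := rmoduleP _ _ mD.
have inM' q : q \in W -> q \notin M -> q \in M' :\: M.
  by move=> qW qM; move: (subsetP UW q qW); rewrite !inE (negbTE qM).
case/subsetPn: WM => q0 q0W q0M.
exists (e a q0); apply: (hcut_uniform (P0 := M) OV).
apply/hcutP; split => //.
- by apply/set0Pn; exists a.
- by apply/subsetPn; exists q0.
- move=> p q pM qW qM; rewrite esym (HM q p a) //.
  have aD : a \notin M' :\: M by rewrite inE aM.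
  by rewrite esym (HD a q q0 (subsetP MW a aM) aD (inM' q qW qM) (inM' q0 q0W q0M)).
Qed.

Lemma card_edge_nonedge W x y u v : [/\ x \in W, y \in W, u \in W & v \in W] ->
  x != y -> u != v -> e x y != e u v -> 2 < #|W|.
Proof.
move=> [xW yW uW vW] xy uv exy.
have three z : z \in W -> z != x -> z != y -> 2 < #|W|.
  move=> zW zx zy; rewrite eq_sym in zx; rewrite eq_sym in zy.
  apply: leq_trans (card3 xy zx zy) _.
  by apply: subset_leq_card; apply/subsetP => w; rewrite !inE => /orP[/orP[]|] /eqP->.
case: (boolP ((u != x) && (u != y))) => [/andP[ux uy]|nu]; first exact: (three u uW ux uy).
case: (boolP ((v != x) && (v != y))) => [/andP[vx vy]|nv]; first exact: (three v vW vx vy).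
move: nu nv exy uv; rewrite !negb_and !negbK.
by case/orP => /eqP-> /orP[]/eqP->; rewrite ?eqxx // esym eqxx.
Qed.

(* W contains an induced P4 a-b-c-d: with s = true the path itself, with
   s = false its complement (which is again a P4, d-b-a-c). *)
Definition has_P4 (W : {set T}) := exists a b c d s,
  [/\ a \in W, b \in W, c \in W & d \in W] /\
  (e a b = s /\ e b c = s /\ e c d = s) /\ (e a c = ~~ s /\ e b d = ~~ s /\ e a d = ~~ s).

Section AddVertex.
Variables (W : {set T}) (v : T).
Hypothesis vW : v \in W.
Let W' := W :\ v.

Lemma hcut_add_vertex t P : hcut W' t P -> (forall p, p \in P -> e v p = t) -> hcut W t P.
Proof.
case/hcutP => PW' Pn0 _ H Hv; have PW : P \subset W.
  by apply: subset_trans PW' _; apply: subsetDl.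
apply/hcutP; split => //.
  apply/subsetPn; exists v => //; apply/negP => vP.
  by move: (subsetP PW' v vP); rewrite !inE eqxx.
move=> p q pP qW qP; case: (eqVneq q v) => [->|qv]; first by rewrite esym Hv.
by apply: H; rewrite // !inE qv qW.
Qed.

(* If v sees the part P of a cut of W \ v with both values, and sees some
   vertex q1 outside P with value ~~ t, then either the vertices of P seen
   with value t form a cut of W, or some vertex w of P seen with value ~~ t
   has a non-t neighbour u' in that set, and u'-w-v-q1 is a P4. *)
Lemma hcut_refine_or_P4 t P p1 q1 u : hcut W' t P -> p1 \in P -> e v p1 = ~~ t ->
  q1 \in W' -> q1 \notin P -> e v q1 = ~~ t -> u \in P -> e v u = t ->
  (exists t P, hcut W t P) \/ has_P4 W.
Proof.
move=> sP p1P vp1 q1W q1P vq1 uP vu.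
have [PW' Pn0 _ H] := hcutP _ _ _ sP.
have W'W : W' \subset W by apply: subsetDl.
set P2 := [set p in P | e v p == t].
case: (boolP [forall w in P, forall u' in P2, (e v w != t) ==> (e w u' == t)]) => HF.
  left; exists t, P2; apply/hcutP; split.
  - apply: subset_trans W'W; apply: subset_trans PW'.
    by apply/subsetP => x; rewrite inE => /andP[].
  - by apply/set0Pn; exists u; rewrite inE uP vu eqxx.
  - apply/subsetPn; exists p1; first exact: (subsetP W'W _ (subsetP PW' _ p1P)).
    by rewrite inE p1P vp1 /=; case: t {vp1 vq1 vu HF H sP P2}.
  - move=> p q; rewrite inE => /andP[pP /eqP vp] qW; rewrite inE negb_and.
    case: (eqVneq q v) => [->|qv]; first by rewrite esym.
    case: (boolP (q \in P)) => qP /=.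
      move=> vq; have := forallP HF q; rewrite qP /= => /forallP/(_ p).
      by rewrite inE pP vp eqxx /= vq => /eqP; rewrite esym.
    by move=> _; apply: H; rewrite // !inE qv qW.
right.
move: HF; rewrite negb_forall => /existsP[w]; rewrite negb_imply => /andP[wP].
rewrite negb_forall => /existsP[u']; rewrite negb_imply => /andP[u'P2].
rewrite negb_imply => /andP[vw wu'].
move: u'P2; rewrite inE => /andP[u'P /eqP vu'].
have wW' := subsetP PW' w wP; have u'W' := subsetP PW' u' u'P.
exists u', w, v, q1, (~~ t); split; first by split => //; apply: (subsetP W'W).
split; (split; [|split]).
- by rewrite esym; apply: neq_negb.
- by rewrite esym; apply: neq_negb.
- by [].
- by rewrite negbK esym.
- by rewrite negbK; apply: H.
- by rewrite negbK; apply: H.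
Qed.

(* Either v is homogeneous towards one side of the cut, or {v} is a
   cut, or v has both values on a side and [hcut_refine_or_P4] applies. *)
Lemma hcut_step t P : hcut W' t P -> (exists t P, hcut W t P) \/ has_P4 W.
Proof.
move=> sP; have [PW' _ _ _] := hcutP _ _ _ sP.
have W'W : W' \subset W by apply: subsetDl.
case: (boolP [forall p in P, e v p == t]) => HA.
  left; exists t, P; apply: hcut_add_vertex sP _ => p pP.
  by have := forallP HA p; rewrite pP => /eqP.
have sQ := hcutC sP.
case: (boolP [forall p in W' :\: P, e v p == t]) => HB.
  left; exists t, (W' :\: P); apply: hcut_add_vertex sQ _ => p pP.
  by have := forallP HB p; rewrite pP => /eqP.
move: HA; rewrite negb_forall => /existsP[p1]; rewrite negb_imply => /andP[p1P vp1].
move: HB; rewrite negb_forall => /existsP[q1]; rewrite negb_imply => /andP[q1Q vq1].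
move: q1Q; rewrite inE => /andP[q1P q1W].
have p1W := subsetP PW' p1 p1P.
case: (boolP [forall u in W', e v u != t]) => HC.
  left; exists (~~ t), [set v]; apply/hcutP; split.
  - by rewrite sub1set.
  - by apply/set0Pn; exists v; rewrite inE.
  - apply/subsetPn; exists p1; first exact: (subsetP W'W).
    by rewrite inE; apply/negP => /eqP E; move: p1W; rewrite E !inE eqxx.
  - move=> p q; rewrite inE => /eqP-> qW; rewrite inE => qv.
    by apply: neq_negb; have := forallP HC q; rewrite !inE qv qW.
move: HC; rewrite negb_forall => /existsP[u]; rewrite negb_imply negbK => /andP[uW /eqP vu].
case: (boolP (u \in P)) => uP.
  exact: (hcut_refine_or_P4 sP p1P (neq_negb vp1) q1W q1P (neq_negb vq1) uP vu).
apply: (hcut_refine_or_P4 (p1 := q1) (q1 := p1) (u := u) sQ) => //; try exact: neq_negb;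
  by rewrite in_setD ?q1P ?q1W ?p1W ?p1P ?uP ?uW.
Qed.

End AddVertex.

Lemma cut_or_P4 n : forall W, #|W| = n.+2 -> (exists t P, hcut W t P) \/ has_P4 W.
Proof.
elim: n => [|n IH] W cW.
  have : 1 < #|W| by rewrite cW.
  case/card_gt1P => x [y [xW yW xy]].
  have WE : W = [set x; y].
    apply/eqP; rewrite eq_sym eqEcard cards2 xy cW leqnn andbT.
    by apply/subsetP => z; rewrite !inE => /orP[] /eqP->.
  left; exists (e x y), [set x]; apply/hcutP; split.
  - by rewrite sub1set.
  - by apply/set0Pn; exists x; rewrite inE.
  - by apply/subsetPn; exists y; rewrite // inE eq_sym.
  - move=> p q; rewrite inE => /eqP-> {p}; rewrite WE !inE => /orP[] /eqP->.
      by rewrite eqxx.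
    by [].
have [v vW] : exists v, v \in W by apply/card_gt0P; rewrite cW.
have cW' : #|W :\ v| = n.+2 by move: cW; rewrite (cardsD1 v W) vW add1n => -[].
case: (IH _ cW') => [[t [P sP]]|[a [b [c [d [s [[aW bW cW1 dW] E]]]]]]].
  exact: (@hcut_step W v vW t P sP).
right; exists a, b, c, d, s; split => //.
by split; apply: (subsetP (subsetDl W [set v])).
Qed.

Definition p4_adj (s : bool) (i j : nat) :=
  if i == j then false else if (i - j == 1) || (j - i == 1) then s else ~~ s.

Definition p4_positions := [:: 0; 1; 2; 3].

Lemma p4_module_full (s m0 m1 m2 m3 : bool) :
  let mem i := nth false [:: m0; m1; m2; m3] i in
  let idx := p4_positions in
  all (fun i => all (fun j => all (fun k =>
     (~~ mem i && mem j && mem k) ==> (p4_adj s i j == p4_adj s i k)) idx) idx) idx ->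
  has (fun i => has (fun j => (i != j) && mem i && mem j) idx) idx -> [&& m0, m1, m2 & m3].
Proof. by case: s; case: m0; case: m1; case: m2; case: m3. Qed.

Lemma seen_apart x y z s : e z x = s -> e z y = ~~ s -> x != y.
Proof. by move=> zx zy; apply: contraTneq isT => xy; move: zy; rewrite -xy zx; case: s {zx}. Qed.

Lemma P4_prime a b c d s :
  (e a b = s /\ e b c = s /\ e c d = s) /\ (e a c = ~~ s /\ e b d = ~~ s /\ e a d = ~~ s) ->
  prime_set [set a; b; c; d].
Proof.
move=> [[ab [bc cd]] [ac [bd ad]]].
have Hab : a != b by apply: (@seen_apart _ _ c (~~ s)); rewrite esym ?negbK.
have Hac : a != c by apply: (@seen_apart _ _ d (~~ s)); rewrite esym ?negbK.
have Hbc : b != c by apply: (@seen_apart _ _ a s).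
set g := fun i => nth a [:: a; b; c; d] i.
have epat i j : i < 4 -> j < 4 -> i != j -> e (g i) (g j) = p4_adj s i j.
  case: i => [|[|[|[|i]]]] // _; case: j => [|[|[|[|j]]]] //= _ _;
  rewrite /p4_adj /=; first [ by [] | by rewrite esym ].
have Zg x : x \in [set a; b; c; d] -> exists2 i, i < 4 & x = g i.
  rewrite !inE => /orP[/orP[/orP[]|]|] /eqP->.
  - by exists 0.
  - by exists 1.
  - by exists 2.
  - by exists 3.
have gZ i : i < 4 -> g i \in [set a; b; c; d].
  by case: i => [|[|[|[|i]]]] //= _; rewrite !inE eqxx ?orbT.
apply/prime_setP; split.
  apply: leq_trans (card3 Hab Hac Hbc) _; apply: subset_leq_card.
  by apply/subsetP => x; rewrite !inE => /orP[/orP[]|] ->; rewrite ?orbT.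
move=> M /rmoduleP[MZ HM] x y xM yM xy.
pose mem i := nth false [:: g 0 \in M; g 1 \in M; g 2 \in M; g 3 \in M] i.
have memE i : i < 4 -> mem i = (g i \in M) by case: i => [|[|[|[|i]]]].
have idx4 i : i \in p4_positions -> i < 4 by case: i => [|[|[|[|i]]]].
have Hall : all (fun i => all (fun j => all (fun k =>
     (~~ mem i && mem j && mem k) ==> (p4_adj s i j == p4_adj s i k))
     p4_positions) p4_positions) p4_positions.
  apply/allP => i /idx4 i4; apply/allP => j /idx4 j4; apply/allP => k /idx4 k4.
  rewrite !memE //; apply/implyP => /andP[/andP[iM jM] kM].
  have nij : i != j by apply/eqP => E; move: iM; rewrite E jM.
  have nik : i != k by apply/eqP => E; move: iM; rewrite E kM.
  by rewrite -!epat // (HM (g i) (g j) (g k)) ?gZ.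
have Hhas : has (fun i => has (fun j => (i != j) && mem i && mem j)
    p4_positions) p4_positions.
  have [i i4 Ex] := Zg x (subsetP MZ x xM).
  have [j j4 Ey] := Zg y (subsetP MZ y yM).
  rewrite Ex Ey in xM yM xy.
  apply/hasP; exists i; first by move: i4; case: i {xM xy Ex} => [|[|[|[|i]]]].
  apply/hasP; exists j; first by move: j4; case: j {yM xy Ey} => [|[|[|[|j]]]].
  by rewrite !memE // xM yM !andbT; apply: contraNneq xy => ->.
case/and4P: (p4_module_full Hall Hhas) => gM0 gM1 gM2 gM3.
by apply/subsetP => z; rewrite !inE => /orP[/orP[/orP[]|]|] /eqP->.
Qed.

Lemma prime_small_subset W : prime_set W -> exists Z, [/\ Z \subset W, prime_set Z & #|Z| <= 4].
Proof.
move=> pW; have [cW _] := prime_setP _ pW.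
have : #|W| = (#|W| - 2).+2 by rewrite -addn2 subnK // ltnW.
move/cut_or_P4 => [[t [P sP]]|]; first by case: (prime_no_hcut pW sP).
move=> [a [b [c [d [s [[aW bW cW1 dW] E]]]]]].
exists [set a; b; c; d]; split.
- by apply/subsetP => x; rewrite !inE => /orP[/orP[/orP[]|]|] /eqP->.
- exact: P4_prime E.
by rewrite -!setUA !cardsU1 cards1; do 3 case: (_ \notin _).
Qed.

Definition uniform_on (u : T) (Z : {set T}) := forall z z', z \in Z -> z' \in Z -> e u z = e u z'.

Definition clone_of (x u : T) (Z : {set T}) := forall z, z \in Z -> z != x -> e z u = e z x.

Definition clone_ofb (Z : {set T}) (x u : T) : bool :=
  [forall z in Z, (z != x) ==> (e z u == e z x)].

Lemma clone_ofP Z x u : reflect (clone_of x u Z) (clone_ofb Z x u).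
Proof.
apply: (iffP forallP) => [H z zZ zx|H z]; last first.
  by apply/implyP => zZ; apply/implyP => zx; apply/eqP; apply: H.
by have := H z; rewrite zZ zx => /eqP.
Qed.

Lemma clone_not_uniform Z x u : prime_set Z -> x \in Z -> clone_of x u Z -> uniform_on u Z -> False.
Proof.
move=> pZ xZ Ht Hu; apply: (prime_no_dominated (c := e u x) pZ xZ) => z zZ zx.
by rewrite -Ht // esym (Hu z x).
Qed.

(* A vertex u outside the prime set Z with u |: Z not prime is uniform on Z or
   a clone of some vertex of Z: take a nontrivial module of u |: Z; its trace
   on Z is trivial, so it is either Z (u uniform) or {x, u} (u clone of x). *)
Lemma one_vertex_extension Z u : prime_set Z -> u \notin Z -> ~~ prime_set (u |: Z) ->
  uniform_on u Z \/ exists2 x, x \in Z & clone_of x u Z.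
Proof.
move=> pZ uZ npZ; have [cZ _] := prime_setP _ pZ.
have ZZ1 : Z \subset u |: Z by apply/subsetP => z zZ; rewrite !inE zZ orbT.
have c1 : 2 < #|u |: Z| by apply: leq_trans cZ (subset_leq_card ZZ1).
move: npZ; rewrite /prime_set c1 /= negb_forall => /existsP[M].
rewrite negb_imply => /andP[mM]; rewrite negb_forall => /existsP[a].
rewrite negb_imply => /andP[aM]; rewrite negb_forall => /existsP[b].
rewrite negb_imply => /andP[bM]; rewrite negb_imply => /andP[ab nsub].
have [MZ1 HM] := rmoduleP _ _ mM.
case: (boolP (Z \subset M)) => ZM.
  have uM : u \notin M.
    apply: contra nsub => uM; apply/subsetP => z.
    by rewrite !inE => /orP[/eqP->|/(subsetP ZM)].
  by left => z z' zZ z'Z; apply: HM; rewrite ?setU11 ?(subsetP ZM z) ?(subsetP ZM z').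
have U := prime_trace_small pZ (rmodule_trace mM ZZ1) ZM.
have inZ z : z \in M -> z != u -> z \in Z.
  by move=> zM zu; move: (subsetP MZ1 z zM); rewrite !inE (negbTE zu).
case: (boolP (u \in M)) => uM; last first.
  have au : a != u by apply: contraNneq uM => <-.
  have bu : b != u by apply: contraNneq uM => <-.
  by move: ab; rewrite (U a b) ?eqxx ?inZ.
have [x xM xZ] : exists2 x, x \in M & x \in Z.
  case: (eqVneq a u) => [Ea|au]; last by exists a => //; apply: inZ.
  by exists b => //; apply: inZ; rewrite // -Ea eq_sym.
right; exists x => // z zZ zx.
have zM : z \notin M by apply: contraNN zx => zM; rewrite (U z x).
by apply: HM; rewrite // (subsetP ZZ1).
Qed.

Section AddTwo.
Variables (Z : {set T}) (p q : T).
Hypotheses (pZ : prime_set Z) (p_notin : p \notin Z) (q_notin : q \notin Z).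
Let Z2 := p |: (q |: Z).

Lemma subset_add2 : Z \subset Z2.
Proof. by apply/subsetP => z zZ; rewrite !inE zZ !orbT. Qed.

Lemma card_add2 : p != q -> #|Z2| = #|Z|.+2.
Proof. by move=> pq; rewrite !cardsU1 !inE negb_or pq p_notin q_notin. Qed.

Lemma mem_add2 M z : M \subset Z2 -> z \in M -> z != p -> z != q -> z \in Z.
Proof. by move=> MZ zM zp zq; move: (subsetP MZ z zM); rewrite !inE (negbTE zp) (negbTE zq). Qed.

Lemma add2_trace M a b : M \subset Z2 -> q \notin M -> a \in M -> b \in M -> a != b ->
  exists2 y, y \in M & y \in Z.
Proof.
move=> MZ qM aM bM ab.
have nq z : z \in M -> z != q by move=> zM; apply: contraNneq qM => <-.
case: (eqVneq a p) => [Ea|ap]; last by exists a; rewrite // (mem_add2 MZ aM ap (nq a aM)).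
by exists b; rewrite // (mem_add2 MZ bM _ (nq b bM)) // -Ea eq_sym.
Qed.

Lemma add2_module_cases M a b : rmodule Z2 M -> a \in M -> b \in M -> a != b ->
  (Z \subset M -> p \in M -> q \in M -> Z2 \subset M) /\
  (~~ (Z \subset M) -> [/\ forall y z, y \in M -> z \in M -> y \in Z -> z \in Z -> y = z
                        & (p \in M) || (q \in M)]).
Proof.
move=> mM aM bM ab; have [MZ2 _] := rmoduleP _ _ mM.
split=> [ZM pM qM|ZM].
  by apply/subsetP => z; rewrite !inE => /orP[/eqP->|/orP[/eqP->|/(subsetP ZM)]].
have U := prime_trace_small pZ (rmodule_trace mM subset_add2) ZM.
split=> //; apply/negPn/negP; rewrite negb_or => /andP[pM qM].
have inZ z : z \in M -> z \in Z.
  by move=> zM; apply: (mem_add2 MZ2 zM); [apply: contraNneq pM | apply: contraNneq qM] => <-.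
by move: ab; rewrite (U a b) ?inZ ?eqxx.
Qed.

End AddTwo.

Lemma prime_add_uniform Z u w x : prime_set Z -> u \notin Z -> w \notin Z ->
  uniform_on u Z -> x \in Z -> clone_of x w Z -> e u w != e u x ->
  prime_set (u |: (w |: Z)).
Proof.
move=> pZ uZ wZ Hu xZ Hw uwx.
have [cZ _] := prime_setP _ pZ; have ZZ2 : Z \subset u |: (w |: Z) by apply: subset_add2.
apply/prime_setP; split; first by apply: leq_trans cZ (subset_leq_card ZZ2).
move=> M mM a b aM bM ab; have [MZ2 HM] := rmoduleP _ _ mM.
have [full part] := add2_module_cases pZ mM aM bM ab.
have uZ2 : u \in u |: (w |: Z) by rewrite !inE eqxx.
have wZ2 : w \in u |: (w |: Z) by rewrite !inE eqxx orbT.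
case: (boolP (Z \subset M)) => ZM.
  have wM : w \in M.
    apply/negPn/negP => wM; apply: (clone_not_uniform pZ xZ Hw) => z z' zZ z'Z.
    by apply: HM; rewrite ?(subsetP ZM z) ?(subsetP ZM z').
  apply: full => //; apply/negPn/negP => uM.
  by move: uwx; rewrite (HM u w x) ?eqxx ?(subsetP ZM x).
have [U uwM] := part ZM; exfalso.
case: (boolP (u \in M)) => uM; case: (boolP (w \in M)) => wM.
- apply: (prime_no_dominated (c := e u x) pZ xZ) => z zZ zx.
  case: (boolP (z \in M)) => zM.
    have xM : x \notin M by apply: contraNN zx => xM; rewrite (U z x).
    by rewrite esym (HM x z u) ?(subsetP ZZ2) // esym.
  by rewrite -Hw // (HM z w u) ?(subsetP ZZ2) // esym (Hu z x).
- have [y0 y0M y0Z] := add2_trace MZ2 wM aM bM ab.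
  apply: (prime_no_dominated (c := e u y0) pZ y0Z) => z zZ zy0.
  have zM : z \notin M by apply: contraNN zy0 => zM; rewrite (U z y0).
  by rewrite -(HM z u y0) ?(subsetP ZZ2) // esym (Hu z y0).
- rewrite setUCA in MZ2.
  have [y0 y0M y0Z] := add2_trace MZ2 uM aM bM ab.
  by move: uwx; rewrite (HM u w y0) // (Hu y0 x) ?eqxx.
- by move: uwM; rewrite (negbTE uM) (negbTE wM).
Qed.

Lemma prime_add_clones Z v u x y : prime_set Z -> v \notin Z -> u \notin Z ->
  x \in Z -> y \in Z -> x != y -> clone_of x v Z -> clone_of y u Z -> e u v != e u x ->
  prime_set (v |: (u |: Z)).
Proof.
move=> pZ vZ uZ xZ yZ xy Hv Hu uvx.
have [cZ _] := prime_setP _ pZ; have ZZ2 : Z \subset v |: (u |: Z) by apply: subset_add2.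
apply/prime_setP; split; first by apply: leq_trans cZ (subset_leq_card ZZ2).
move=> M mM a b aM bM ab; have [MZ2 HM] := rmoduleP _ _ mM.
have [full part] := add2_module_cases pZ mM aM bM ab.
have vZ2 : v \in v |: (u |: Z) by rewrite !inE eqxx.
have uZ2 : u \in v |: (u |: Z) by rewrite !inE eqxx orbT.
have unifM w : w \in v |: (u |: Z) -> w \notin M -> Z \subset M -> uniform_on w Z.
  by move=> wZ2 wM ZM z z' zZ z'Z; apply: HM; rewrite ?(subsetP ZM z) ?(subsetP ZM z').
case: (boolP (Z \subset M)) => ZM.
  apply: full => //; apply/negPn/negP.
    by move=> vM; apply: (clone_not_uniform pZ xZ Hv (unifM v vZ2 vM ZM)).
  by move=> uM; apply: (clone_not_uniform pZ yZ Hu (unifM u uZ2 uM ZM)).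
have [U vuM] := part ZM; exfalso.
case: (boolP (v \in M)) => vM; case: (boolP (u \in M)) => uM.
- apply: (prime_no_twins pZ xZ yZ xy) => z zZ zx zy.
  case: (boolP (z \in M)) => zM.
    have xM : x \notin M by apply: contraNN zx => xM; rewrite (U z x).
    have yM : y \notin M by apply: contraNN zy => yM; rewrite (U z y).
    rewrite [e z x]esym [e z y]esym (HM x z u) ?(subsetP ZZ2) // Hu //.
    by rewrite (HM y z v) ?(subsetP ZZ2) // Hv // eq_sym.
  by rewrite -Hv // (HM z v u) ?(subsetP ZZ2) // Hu.
- have [y0 y0M y0Z] := add2_trace MZ2 uM aM bM ab.
  have Huv : e u v = e u y0 by apply: HM.
  case: (eqVneq y0 x) => [E|y0x]; first by move: uvx; rewrite Huv E eqxx.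
  apply: (prime_no_twins pZ xZ y0Z (y := y0)); first by rewrite eq_sym.
  move=> z zZ zx zy0.
  have zM : z \notin M by apply: contraNN zy0 => zM; rewrite (U z y0).
  by rewrite -Hv // (HM z v y0) ?(subsetP ZZ2).
- rewrite setUCA in MZ2.
  have [y0 y0M y0Z] := add2_trace MZ2 vM aM bM ab.
  have Hvu : e v u = e v y0 by apply: HM.
  case: (eqVneq y0 y) => [E|y0y].
    have yx : y != x by rewrite eq_sym.
    have : e u v = e u x by rewrite esym Hvu E (esym v y) Hv // (esym y x) -Hu // esym.
    by move=> E'; move: uvx; rewrite E' eqxx.
  apply: (prime_no_twins pZ yZ y0Z (y := y0)); first by rewrite eq_sym.
  move=> z zZ zy zy0.
  have zM : z \notin M by apply: contraNN zy0 => zM; rewrite (U z y0).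
  by rewrite -Hu // (HM z u y0) ?(subsetP ZZ2).
- by move: vuM; rewrite (negbTE vM) (negbTE uM).
Qed.

Definition small_prime_ext (W Z Z' : {set T}) :=
  [/\ Z \subset Z', Z' \subset W, prime_set Z', #|Z| < #|Z'| & #|Z'| <= #|Z|.+2].

Section Grow.
Variables (W Z : {set T}).
Hypotheses (pW : prime_set W) (pZ : prime_set Z) (ZW : Z \subset W).

Lemma small_ext1 u : u \in W -> u \notin Z -> prime_set (u |: Z) ->
  exists Z', small_prime_ext W Z Z'.
Proof.
move=> uW uZ pu; exists (u |: Z); split; rewrite ?cardsU1 ?uZ //.
- by apply/subsetP => z zZ; rewrite !inE zZ orbT.
- by apply/subsetP => z; rewrite !inE => /orP[/eqP->|/(subsetP ZW)].
Qed.

Lemma small_ext2 p q : p \in W -> q \in W -> p \notin Z -> q \notin Z -> p != q ->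
  prime_set (p |: (q |: Z)) -> exists Z', small_prime_ext W Z Z'.
Proof.
move=> pW' qW pZ' qZ pq pr; exists (p |: (q |: Z)); split; rewrite ?card_add2 //.
- exact: subset_add2.
- by apply/subsetP => z; rewrite !inE => /orP[/eqP->|/orP[/eqP->|/(subsetP ZW)]].
Qed.

(* Let C be
   Z together with all clones; C is not a module of G[W] (it would contain two
   vertices but not v), so some u outside C, hence uniform, separates two
   vertices of C; one of them is a clone w of some x separated by u from x. *)
Lemma grow_uniform v : v \in W -> v \notin Z -> uniform_on v Z ->
  (forall u, u \in W -> u \notin Z -> uniform_on u Z \/ exists2 x, x \in Z & clone_of x u Z) ->
  exists Z', small_prime_ext W Z Z'.
Proof.
move=> vW vZ uv cls.
have [cZ _] := prime_setP _ pZ; have [_ HW] := prime_setP _ pW.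
have [z0 z0Z] : exists z0, z0 \in Z by apply/set0Pn; rewrite -card_gt0 ltnW // ltnW.
set C := Z :|: [set w in W :\: Z | [exists x in Z, clone_ofb Z x w]].
have CW : C \subset W.
  by apply/subsetP => w; rewrite !inE => /orP[/(subsetP ZW)|/andP[/andP[]]].
have nC : ~~ rmodule W C.
  apply/negP => mC; have : 1 < #|Z| by apply: ltnW.
  case/card_gt1P => p [q [pZ1 qZ1 pq]].
  have := HW C mC p q; rewrite !inE pZ1 qZ1 /= => /(_ isT isT pq) /subsetP/(_ v vW).
  rewrite !inE (negbTE vZ) vW /= => /existsP[x]; rewrite andbC => /andP[/clone_ofP tx xZ].
  exact: (clone_not_uniform pZ xZ tx uv).
have [u [a [b [uW uC aC bC uab]]]] := not_rmodule CW nC.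
have uZ : u \notin Z by apply: contra uC; rewrite !inE => ->.
have uu : uniform_on u Z.
  case: (cls u uW uZ) => // [[x xZ tx]]; move: uC; rewrite !inE (negbTE uZ) uW /=.
  by move/existsP; case; exists x; rewrite xZ; apply/clone_ofP.
have [w [wC wZ wu]] : exists w, [/\ w \in C, w \notin Z & e u w != e u z0].
  case: (boolP (e u a == e u z0)) => Ha.
    exists b; split => //; last by apply: contra uab => /eqP->.
    by apply: contraNN uab => bZ; rewrite (eqP Ha) (uu z0 b).
  by exists a; split => //; apply: contraNN Ha => aZ; rewrite (uu z0 a).
have [x xZ tx] : exists2 x, x \in Z & clone_of x w Z.
  move: wC; rewrite !inE (negbTE wZ) /= => /andP[_] /existsP[x]; rewrite andbC.
  by move=> /andP[/clone_ofP tx xZ]; exists x.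
have uw : u != w by apply: contraNneq uC => ->.
apply: (small_ext2 uW (subsetP CW w wC)) => //.
by apply: (prime_add_uniform pZ uZ wZ uu xZ tx); rewrite -(uu z0 x).
Qed.

(* Let X be a vertex x of Z
   together with its clones; X is not a module of G[W] (it would contain a
   clone and x, but not the rest of Z), so some u outside X separates x from a
   clone v of x; u is a clone of another vertex y of Z. *)
Lemma grow_clones : Z \proper W ->
  (forall u, u \in W -> u \notin Z -> exists2 x, x \in Z & clone_of x u Z) ->
  exists Z', small_prime_ext W Z Z'.
Proof.
move=> /properP[_ [v0 v0W v0Z]] nonunif.
have [cZ _] := prime_setP _ pZ; have [_ HW] := prime_setP _ pW.
have [x xZ tx0] := nonunif v0 v0W v0Z.
set X := x |: [set w in W :\: Z | clone_ofb Z x w].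
have XW : X \subset W.
  by apply/subsetP => w; rewrite !inE => /orP[/eqP->|/andP[/andP[]]] //; apply: (subsetP ZW).
have nX : ~~ rmodule W X.
  apply/negP => mX.
  have v0X : v0 \in X by rewrite !inE v0Z v0W /=; apply/orP; right; apply/clone_ofP.
  have xv0 : x != v0 by apply: contraNneq v0Z => <-.
  have WX := HW X mX x v0 (setU11 _ _) v0X xv0.
  have : 1 < #|Z :\ x| by move: cZ; rewrite (cardsD1 x Z) xZ.
  move/ltnW; case/card_gt0P => z; rewrite !inE => /andP[zx zZ].
  by move: (subsetP WX z (subsetP ZW z zZ)); rewrite !inE (negbTE zx) zZ.
have [u [a [b [uW uX aX bX uab]]]] := not_rmodule XW nX.
have Xx p w : p \in Z -> p != x -> w \in X -> e p w = e p x.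
  by move=> pZ0 px; rewrite !inE => /orP[/eqP->//|/andP[_ /clone_ofP tw]]; apply: tw.
have uZ : u \notin Z.
  apply/negP => uZ; have ux : u != x by apply: contraNneq uX => ->; apply: setU11.
  by move: uab; rewrite (Xx u a) // (Xx u b) // eqxx.
have [y yZ ty] := nonunif u uW uZ.
have yx : x != y.
  apply/eqP => E; move: uX; rewrite !inE uZ uW /=; case/norP => _ /negP; case.
  by apply/clone_ofP; rewrite E.
have [v [vX vx vu]] : exists v, [/\ v \in X, v != x & e u v != e u x].
  case: (boolP (e u a == e u x)) => Ha.
    exists b; split => //; last by rewrite -(eqP Ha) eq_sym.
    by apply: contraNneq uab => E; rewrite E Ha.
  by exists a; split => //; apply: contraNneq Ha => ->.
have [vZ vW tv] : [/\ v \notin Z, v \in W & clone_of x v Z].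
  by move: vX; rewrite !inE (negbTE vx) /= => /andP[/andP[vZ vW] /clone_ofP tv].
have vu' : v != u by apply: contraNneq uX => <-.
apply: (small_ext2 vW uW) => //.
exact: (prime_add_clones pZ vZ uZ xZ yZ yx tv ty vu).
Qed.

(* Either some vertex extends Z alone, or by
   [one_vertex_extension] every outside vertex is uniform or a clone. *)
Lemma prime_grows : Z \proper W -> exists Z', small_prime_ext W Z Z'.
Proof.
move=> ZpW.
case: (boolP [exists u in W :\: Z, prime_set (u |: Z)]).
  by case/existsP => u; rewrite !inE => /andP[/andP[uZ uW] pu]; apply: (small_ext1 uW).
rewrite negb_exists => /forallP HN.
have cls u : u \in W -> u \notin Z -> uniform_on u Z \/ exists2 x, x \in Z & clone_of x u Z.
  by move=> uW uZ; apply: one_vertex_extension => //; have := HN u; rewrite !inE uZ uW.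
case: (boolP [exists v in W :\: Z, [forall z in Z, forall z' in Z, e v z == e v z']]).
  case/existsP => v; rewrite inE => /andP[/andP[vZ vW] /forallP Hv].
  apply: (grow_uniform vW vZ _ cls) => z z' zZ z'Z.
  by have := Hv z; rewrite zZ => /forallP/(_ z'); rewrite z'Z => /eqP.
rewrite negb_exists => /forallP HU; apply: grow_clones => // u uW uZ.
case: (cls u uW uZ) => // uu; have := HU u; rewrite !inE uZ uW /= => /negP; case.
apply/forallP => z; apply/implyP => zZ; apply/forallP => z'; apply/implyP => z'Z.
by apply/eqP; apply: uu.
Qed.

End Grow.

Lemma prime_grow_to k W Z : prime_set W -> k < #|W| -> prime_set Z -> Z \subset W ->
  exists Z', [/\ Z' \subset W, prime_set Z', k < #|Z'| & #|Z'| <= maxn #|Z| k.+2].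
Proof.
move=> pW kW; move: {2}(#|W| - #|Z|) (leqnn (#|W| - #|Z|)) => n.
elim: n Z => [|n IH] Z cn pZ ZW;
  (case: (ltnP k #|Z|) => kZ; first by exists Z; split => //; rewrite leq_maxl);
  have cZW := subset_leq_card ZW; first by exfalso; lia.
have ZpW : Z \proper W.
  by rewrite properEcard ZW; lia.
have [Z1 [ZZ1 Z1W pZ1 c2 c3]] := prime_grows pW pZ ZW ZpW.
have [Z' [Z'W pZ' kZ' cZ']] : exists Z', [/\ Z' \subset W, prime_set Z', k < #|Z'|
    & #|Z'| <= maxn #|Z1| k.+2].
  by apply: IH => //; have := subset_leq_card Z1W; lia.
exists Z'; split => //; apply: (leq_trans cZ'); rewrite geq_max leq_maxr andbT.
by apply: leq_trans c3 _; apply: leq_trans (leq_maxr _ _); lia.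
Qed.

(* A prime set with more than k vertices contains a prime set with between
   k + 1 and k + 4 vertices: grow from a prime set of at most 4 vertices. *)
Lemma prime_shrink W k : prime_set W -> k < #|W| ->
  exists Z, [/\ Z \subset W, prime_set Z, k < #|Z| & #|Z| <= k + 4].
Proof.
move=> pW kW; have [Z0 [Z0W pZ0 c0]] := prime_small_subset pW.
have [Z' [Z'W pZ' kZ' cZ']] := prime_grow_to pW kW pZ0 Z0W.
exists Z'; split => //; apply: (leq_trans cZ'); rewrite geq_max; apply/andP; split; lia.
Qed.

End PrimeSets.
Section Decomposition.
Variables (T : finType) (e : rel T).
Hypothesis esym : symmetric e.
Implicit Types M N C X Y A B : {set T}.

Lemma moduleE M : module e M = rmodule e setT M.
Proof.
apply/idP/idP.
  move=> /forallP H; apply/rmoduleP; split; first exact: subsetT.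
  move=> x y z _ xM yM zM; have := H x; rewrite xM /= => /orP[] /forallP Hx.
    by have := Hx y; have := Hx z; rewrite yM zM /= => -> ->.
  by have := Hx y; have := Hx z; rewrite yM zM /= => /negbTE-> /negbTE->.
move=> /rmoduleP[_ H]; apply/forallP => x; apply/implyP => xM.
case: (boolP [forall y in M, e x y]) => //= /forallPn[y1]; rewrite negb_imply => /andP[y1M nxy1].
apply/forallP => y; apply/implyP => yM.
by rewrite (H x y y1) // in_setT.
Qed.

Lemma moduleP M : reflect (forall x y z, x \notin M -> y \in M -> z \in M -> e x y = e x z)
  (module e M).
Proof.
rewrite moduleE; apply: (iffP (rmoduleP _ _ _)) => [[_ H] x y z|H].
  by apply: H; rewrite in_setT.
by split; [apply: subsetT | move=> x y z _; apply: H].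
Qed.

Lemma strongT : strong e setT.
Proof.
apply/andP; split; first by apply/moduleP => x y z; rewrite in_setT.
by apply/forallP => M; apply/implyP => _; rewrite /overlap subsetT !andbF.
Qed.

Lemma strong1 x : strong e [set x].
Proof.
apply/andP; split.
  by apply/moduleP => p y z _; rewrite !inE => /eqP-> /eqP->.
apply/forallP => M; apply/implyP => _; rewrite /overlap sub1set.
case: (boolP (x \in M)) => xM /=; first by rewrite andbF.
rewrite (_ : [set x] :&: M = set0) ?eqxx //.
by apply/setP => y; rewrite !inE; apply/negP => /andP[/eqP-> ]; rewrite (negbTE xM).
Qed.

Lemma strong_module M : strong e M -> module e M.
Proof. by case/andP. Qed.

Lemma strong_nested M M' u : strong e M -> module e M' -> u \in M -> u \in M' ->
  (M \subset M') \/ (M' \subset M).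
Proof.
case/andP => _ /forallP/(_ M') + mM' uM uM'; rewrite mM' /overlap /= => H.
have I0 : M :&: M' != set0 by apply/set0Pn; exists u; rewrite inE uM uM'.
by move: H; rewrite I0 /= negb_and !negbK => /orP[]; [left | right].
Qed.

Lemma mchildP N C : reflect [/\ strong e C, C \proper N &
   forall M', strong e M' -> M' \proper N -> C \subset M' -> M' = C] (mchild e N C).
Proof.
apply: (iffP and3P) => [[H1 H2 /forallP H3]|[H1 H2 H3]]; split => //.
  by move=> M' sM' pM' CM'; have := H3 M'; rewrite sM' pM' CM' /= => /eqP.
apply/forallP => M'; apply/implyP => /andP[/andP[sM' pM'] CM'].
by apply/eqP; apply: H3.
Qed.

Lemma child_sub N C : mchild e N C -> C \subset N.
Proof. by case/mchildP => _ /properP[]. Qed.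

Lemma child_disj N C1 C2 u : mchild e N C1 -> mchild e N C2 -> u \in C1 -> u \in C2 -> C1 = C2.
Proof.
move=> /mchildP[s1 p1 m1] /mchildP[s2 p2 m2] u1 u2.
by case: (strong_nested s1 (strong_module s2) u1 u2) => H; [symmetry; apply: m1 | apply: m2].
Qed.

Lemma children_disjoint N C1 C2 : mchild e N C1 -> mchild e N C2 -> C1 != C2 ->
  C1 :&: C2 = set0.
Proof.
move=> m1 m2 C12; apply/setP => u; rewrite !inE; apply/negP => /andP[u1 u2].
by move: C12; rewrite (child_disj m1 m2 u1 u2) eqxx.
Qed.

(* The child of N containing u (set0 if there is none). *)
Definition child_of N (u : T) : {set T} := odflt set0 [pick C | mchild e N C && (u \in C)].

(* Every vertex of an internal node lies in a child: a largest strong proper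
   submodule containing {u}. *)
Lemma child_ofP N u : 1 < #|N| -> u \in N -> mchild e N (child_of N u) && (u \in child_of N u).
Proof.
move=> cN uN; rewrite /child_of; case: pickP => [C //|none].
have p1 : [set u] \proper N.
  apply/properP; split; first by rewrite sub1set.
  case/card_gt1P: cN => a [b [aN bN ab]].
  case: (eqVneq a u) => [E|au]; last by exists a; rewrite // inE.
  by exists b; rewrite // inE -E eq_sym.
case: (arg_maxnP (fun M => #|M|) (i0 := [set u])
   (P := fun M => [&& strong e M, M \proper N & u \in M])).
  by rewrite strong1 p1 inE eqxx.
move=> C /and3P[sC pC uC] Cmax; move: (none C); rewrite uC andbT => /negP[].
apply/mchildP; split => // M' sM' pM' CM'.
apply/eqP; rewrite eq_sym eqEcard CM' /=.
by apply: Cmax; rewrite sM' pM' (subsetP CM').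
Qed.

Lemma child_ofE N C u : mchild e N C -> u \in C -> child_of N u = C.
Proof.
move=> mC uC; have uN := subsetP (child_sub mC) u uC.
have cN : 1 < #|N|.
  case/mchildP: mC => _ /proper_card + _; apply: leq_trans.
  by rewrite ltnS card_gt0; apply/set0Pn; exists u.
by case/andP: (child_ofP cN uN) => mu uu; apply: child_disj mu mC uu uC.
Qed.

(* Children of an internal node are nonempty: the empty set would lie below
   the child containing any vertex of N, contradicting maximality. *)
Lemma child_nonempty N C : 1 < #|N| -> mchild e N C -> exists x, x \in C.
Proof.
move=> cN mC; case: (set_0Vmem C) => [C0|[x xC]]; last by exists x.
have [u uN] : exists u, u \in N by apply/card_gt0P; apply: ltnW.
case/andP: (child_ofP cN uN) => /mchildP[sD pD _] uD.
case/mchildP: mC => _ _ /(_ _ sD pD); rewrite C0 sub0set => /(_ isT) E.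
by move: uD; rewrite E inE.
Qed.

(* Between two disjoint modules, all pairs have the same adjacency; hence the
   quotient adjacency of two children is read off any pair of vertices. *)
Lemma disjoint_modules_uniform A B a a' b b' : module e A -> module e B -> A :&: B = set0 ->
  a \in A -> a' \in A -> b \in B -> b' \in B -> e a b = e a' b'.
Proof.
move=> /moduleP HA /moduleP HB AB aA a'A bB b'B.
have nB p : p \in A -> p \notin B.
  by move=> pA; apply/negP => pB; move/setP: AB => /(_ p); rewrite !inE pA pB.
have nA p : p \in B -> p \notin A.
  by move=> pB; apply/negP => pA; move/setP: AB => /(_ p); rewrite !inE pA pB.
by rewrite (HB a b b') ?nB // esym (HA b' a a') ?nA // esym.
Qed.

Lemma qadjE C1 C2 x y : module e C1 -> module e C2 -> C1 :&: C2 = set0 ->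
  x \in C1 -> y \in C2 -> qadj e C1 C2 = e x y.
Proof.
move=> m1 m2 I0 xC yC; apply/idP/idP.
  by move=> /forallP/(_ x); rewrite xC => /forallP/(_ y); rewrite yC.
move=> exy; apply/forallP => a; apply/implyP => aC; apply/forallP => b; apply/implyP => bC.
by rewrite (disjoint_modules_uniform m1 m2 I0 aC xC bC yC).
Qed.

(* If N is a least strong module containing the prime set X, distinct vertices
   of X lie in distinct children of N: a child containing two of them would
   contain X by primality, contradicting minimality. *)
Lemma child_of_inj X N : prime_set e X -> strong e N -> X \subset N ->
  (forall M, strong e M -> X \subset M -> #|N| <= #|M|) -> {in X &, injective (child_of N)}.
Proof.
move=> pX sN XN Nmin x y xX yX E; apply/eqP/negPn/negP => xy.
have [cX HX] := prime_setP _ _ pX.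
have cN : 1 < #|N| by apply: leq_trans (ltnW cX) (subset_leq_card XN).
case/andP: (child_ofP cN (subsetP XN x xX)) => mx xC.
case/andP: (child_ofP cN (subsetP XN y yX)) => _; rewrite -E => yC.
case/mchildP: (mx) => sC pC _.
have mC : rmodule e X (child_of N x :&: X).
  by apply: (rmodule_trace (W := setT)); rewrite ?subsetT // -moduleE strong_module.
have := HX _ mC x y; rewrite !inE xC yC xX yX => /(_ isT isT xy) XC.
have := Nmin _ sC (subset_trans XC (subsetIl _ _)).
by rewrite leqNgt (proper_card pC).
Qed.

(* A prime set X lies in a prime node with at least |X| children, namely the
   least strong module containing X. *)
Lemma prime_in_node X : prime_set e X -> exists N, prime_node e N /\ #|X| <= #|children e N|.
Proof.
move=> pX; have [cX _] := prime_setP _ _ pX.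
case: (arg_minnP (fun M => #|M|) (i0 := setT) (P := fun M => strong e M && (X \subset M))).
  by rewrite strongT subsetT.
move=> N /andP[sN XN] Nmin.
have Nmin' M : strong e M -> X \subset M -> #|N| <= #|M| by move=> sM XM; apply: Nmin; rewrite sM.
have inj := child_of_inj pX sN XN Nmin'.
have cN : 1 < #|N| by apply: leq_trans (ltnW cX) (subset_leq_card XN).
have chP x : x \in X -> mchild e N (child_of N x) && (x \in child_of N x).
  by move=> xX; apply: child_ofP => //; apply: (subsetP XN).
have qE x y : x \in X -> y \in X -> x != y ->
   [/\ child_of N x \in children e N, child_of N y \in children e N,
       child_of N x != child_of N y & qadj e (child_of N x) (child_of N y) = e x y].
  move=> xX yX xy; case/andP: (chP x xX) => mx xC; case/andP: (chP y yX) => my yC.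
  have cxy : child_of N x != child_of N y by apply: contraNneq xy => /inj ->.
  split; rewrite ?inE //; case/mchildP: (mx) => sx _ _; case/mchildP: (my) => sy _ _.
  by apply: qadjE; rewrite ?strong_module // (children_disjoint mx my).
exists N; split.
  rewrite /prime_node sN cN /=; apply/andP; split; apply/negP.
    have [x [y [xX yX xy /= exy]]] := prime_has_pair esym false pX.
    have [cx cy cxy q] := qE x y xX yX xy.
    by move=> /forallP/(_ _)/implyP/(_ cx)/forallP/(_ _)/implyP/(_ cy); rewrite cxy q exy.
  have [x [y [xX yX xy /= exy]]] := prime_has_pair esym true pX.
  have [cx cy cxy q] := qE x y xX yX xy.
  by move=> /forallP/(_ _)/implyP/(_ cx)/forallP/(_ _)/implyP/(_ cy); rewrite cxy q exy.
rewrite -(card_in_imset inj); apply: subset_leq_card; apply/subsetP => C /imsetP[x xX ->].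
by rewrite inE; case/andP: (chP x xX).
Qed.

(* The quotient graph of a prime node N is prime.  Representing each child by
   one of its vertices gives a set [reps] of vertices inducing the quotient. *)
Section PrimeNode.
Variables (N : {set T}) (x0 : T).
Hypothesis Nprime : prime_node e N.

Let sN : strong e N. Proof. by case/and4P: Nprime. Qed.
Let cN : 1 < #|N|. Proof. by case/and4P: Nprime. Qed.

Definition rep (C : {set T}) : T := odflt x0 [pick x in C].
Definition reps : {set T} := [set rep C | C in children e N].

Lemma child_of_children u : u \in N -> (child_of N u \in children e N) && (u \in child_of N u).
Proof. by move=> uN; rewrite inE; apply: child_ofP. Qed.

Lemma rep_in C : C \in children e N -> rep C \in C.
Proof.
rewrite inE => mC; rewrite /rep; case: pickP => [x //|none].
by have [x xC] := child_nonempty cN mC; move: (none x); rewrite xC.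
Qed.

Lemma rep_child C : C \in children e N -> child_of N (rep C) = C.
Proof. by move=> cC; apply: child_ofE (rep_in cC); rewrite -inE. Qed.

Lemma rep_inj : {in children e N &, injective rep}.
Proof. by move=> C1 C2 c1 c2 E; rewrite -(rep_child c1) E rep_child. Qed.

Lemma card_reps : #|reps| = #|children e N|.
Proof. exact: card_in_imset rep_inj. Qed.

Lemma rep_adj C1 C2 a b : C1 \in children e N -> C2 \in children e N -> C1 != C2 ->
  a \in C1 -> b \in C2 -> e a b = e (rep C1) (rep C2).
Proof.
move=> c1 c2 C12 aC bC; move: (c1) (c2); rewrite !inE => m1 m2.
case/mchildP: (m1) => s1 _ _; case/mchildP: (m2) => s2 _ _.
apply: (disjoint_modules_uniform (strong_module s1) (strong_module s2)
  (children_disjoint m1 m2 C12)) => //; exact: rep_in.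
Qed.

Lemma qadj_rep C1 C2 : C1 \in children e N -> C2 \in children e N -> C1 != C2 ->
  qadj e C1 C2 = e (rep C1) (rep C2).
Proof.
move=> c1 c2 C12; move: (c1) (c2); rewrite !inE => m1 m2.
case/mchildP: (m1) => s1 _ _; case/mchildP: (m2) => s2 _ _.
by apply: qadjE; rewrite ?strong_module ?(children_disjoint m1 m2 C12) ?rep_in.
Qed.

Definition lift (Y : {set T}) : {set T} := \bigcup_(C in children e N | rep C \in Y) C.

Lemma mem_lift Y u : u \in N -> (u \in lift Y) = (rep (child_of N u) \in Y).
Proof.
move=> uN; case/andP: (child_of_children uN) => cu uu.
apply/bigcupP/idP => [[C /andP[cC CY] uC]|chY]; last by exists (child_of N u); rewrite ?cu.
by rewrite (child_ofE _ uC) // -inE.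
Qed.

Lemma lift_sub Y : lift Y \subset N.
Proof. by apply/subsetP => u /bigcupP[C /andP[cC _]]; apply/subsetP/child_sub; rewrite -inE. Qed.

Lemma lift_module Y : rmodule e reps Y -> module e (lift Y).
Proof.
move=> /rmoduleP[YX HY]; apply/moduleP => v p q vU pU qU.
have pN := subsetP (lift_sub Y) p pU; have qN := subsetP (lift_sub Y) q qU.
case: (boolP (v \in N)) => vN; last by apply: (moduleP _ (strong_module sN)).
case/andP: (child_of_children vN) => cv vv.
case/andP: (child_of_children pN) => cp pp; case/andP: (child_of_children qN) => cq qq.
rewrite mem_lift // in vU; rewrite mem_lift // in pU; rewrite mem_lift // in qU.
have nvp : child_of N v != child_of N p by apply: contraNneq vU => ->.
have nvq : child_of N v != child_of N q by apply: contraNneq vU => ->.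
rewrite (rep_adj cv cp nvp vv pp) (rep_adj cv cq nvq vv qq).
by apply: HY => //; apply/imsetP; exists (child_of N v).
Qed.

Lemma rep_of Y a : Y \subset reps -> a \in Y -> exists2 C, C \in children e N & a = rep C.
Proof. by move=> YX aY; case/imsetP: (subsetP YX a aY) => C cC ->; exists C. Qed.

(* The lift of a module of G[reps] with two vertices other than reps is not
   strong: it would be a strong proper submodule of N strictly containing a
   child. *)
Lemma lift_not_strong Y a b : rmodule e reps Y -> a \in Y -> b \in Y -> a != b ->
  ~~ (reps \subset Y) -> ~~ strong e (lift Y).
Proof.
move=> mY aY bY ab XY; apply/negP => sU; have [YX _] := rmoduleP _ _ _ mY.
have [Ca ca Ea] := rep_of YX aY; have [Cb cb Eb] := rep_of YX bY.
have pU : lift Y \proper N.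
  apply/properP; split; first exact: lift_sub.
  case/subsetPn: XY => _ /imsetP[C0 c0 ->] x0Y.
  exists (rep C0); first by apply: (subsetP (child_sub _) _ (rep_in c0)); rewrite -inE.
  by rewrite mem_lift ?rep_child // (subsetP (child_sub _) _ (rep_in c0)) // -inE.
have CaU : Ca \subset lift Y.
  by apply/subsetP => u uC; apply/bigcupP; exists Ca; rewrite ?ca -?Ea.
move: (ca); rewrite inE => /mchildP[_ _ /(_ _ sU pU CaU) E].
have rb : rep Cb \in Ca.
  by rewrite -E; apply/bigcupP; exists Cb; [rewrite cb -Eb | exact: rep_in].
have CaCb : Ca = Cb by rewrite -(rep_child cb) (child_ofE _ rb) // -inE.
by move: ab; rewrite Ea Eb CaCb eqxx.
Qed.

(* Overlap property of the quotient: a module of G overlapping the lift of Y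
   traces on reps a module overlapping Y. *)
Lemma reps_overlap : overlap_property e reps.
Proof.
move=> Y a b mY aY bY ab XY; have [YX _] := rmoduleP _ _ _ mY.
move: (lift_not_strong mY aY bY ab XY); rewrite /strong lift_module //= negb_forall.
move=> /existsP[M']; rewrite negb_imply negbK => /andP[mM' ov].
case/and3P: (ov) => /set0Pn[u0]; rewrite inE => /andP[u0U u0M'] nUM nMU.
have u0N := subsetP (lift_sub Y) u0 u0U.
have M'N : M' \subset N.
  case: (strong_nested sN mM' u0N u0M') => // NM.
  by move: nUM; rewrite (subset_trans (lift_sub Y) NM).
(* M' is a union of children: a child C meeting M' is nested with it, and
   M' inside C would put M' inside the lift, since C contains u0. *)
have Cwhole C u : C \in children e N -> u \in C -> u \in M' -> C \subset M'.
  move=> cC uC uM'; move: (cC); rewrite inE => mC; case/mchildP: (mC) => sC _ _.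
  case: (strong_nested sC mM' uC uM') => // M'C.
  have u0C := subsetP M'C u0 u0M'.
  move: u0U; rewrite mem_lift // (child_ofE mC u0C) => CY.
  move/negP: nMU; case; apply/subsetP => w wM'; apply/bigcupP; exists C.
    by rewrite cC.
  exact: (subsetP M'C).
have repM' u : u \in N -> u \in M' -> rep (child_of N u) \in M'.
  by move=> uN uM'; case/andP: (child_of_children uN) => cu uu; apply: (subsetP (Cwhole _ _ cu uu uM')); apply: rep_in.
have repX u : u \in N -> rep (child_of N u) \in reps.
  by move=> uN; case/andP: (child_of_children uN) => cu _; apply/imsetP; exists (child_of N u).
exists (M' :&: reps); split.
  by apply: (rmodule_trace (W := setT)); rewrite ?subsetT // -moduleE.
apply/and3P; split.
- apply/set0Pn; exists (rep (child_of N u0)).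
  by rewrite inE -mem_lift // u0U inE repM' // repX.
- case/subsetPn: nUM => u1 u1U u1M'; have u1N := subsetP (lift_sub Y) u1 u1U.
  apply/subsetPn; exists (rep (child_of N u1)); first by rewrite -mem_lift.
  rewrite inE negb_and; apply/orP; left; apply: contra u1M' => rM'.
  case/andP: (child_of_children u1N) => c1 u1C.
  exact: (subsetP (Cwhole _ _ c1 (rep_in c1) rM')).
- case/subsetPn: nMU => u2 u2M' u2U; have u2N := subsetP M'N u2 u2M'.
  apply/subsetPn; exists (rep (child_of N u2)); first by rewrite inE repM' ?repX.
  by rewrite -mem_lift.
Qed.

Lemma quotient_pair b : exists C1 C2,
  [/\ C1 \in children e N, C2 \in children e N, C1 != C2 & e (rep C1) (rep C2) = b].
Proof.
case/and4P: Nprime => _ _ nE nC; case: b.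
  move: nE; rewrite negb_forall => /existsP[C1]; rewrite negb_imply => /andP[c1].
  rewrite negb_forall => /existsP[C2]; rewrite negb_imply => /andP[c2].
  by rewrite negb_imply negbK => /andP[C12 q]; exists C1, C2; rewrite -qadj_rep.
move: nC; rewrite negb_forall => /existsP[C1]; rewrite negb_imply => /andP[c1].
rewrite negb_forall => /existsP[C2]; rewrite negb_imply => /andP[c2].
by rewrite negb_imply => /andP[C12 /negbTE q]; exists C1, C2; rewrite -qadj_rep.
Qed.

Lemma rep_mem C : C \in children e N -> rep C \in reps.
Proof. by move=> cC; apply/imsetP; exists C. Qed.

Lemma rep_neq C1 C2 : C1 \in children e N -> C2 \in children e N -> C1 != C2 ->
  rep C1 != rep C2.
Proof. by move=> c1 c2; apply: contra => /eqP/rep_inj ->. Qed.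

(* Overlap criterion: a module of G[reps] with two vertices other than reps
   would make the quotient complete or edgeless. *)
Lemma reps_prime : prime_set e reps.
Proof.
have [C1 [C2 [c1 c2 C12 q12]]] := quotient_pair true.
have [C3 [C4 [c3 c4 C34 q34]]] := quotient_pair false.
apply/prime_setP; split.
  apply: (card_edge_nonedge esym (x := rep C1) (y := rep C2) (u := rep C3) (v := rep C4));
    by rewrite ?rep_mem ?rep_neq ?q12 ?q34.
move=> M mM a b aM bM ab; apply/negPn/negP => XM.
have [t Ht] := overlap_uniform esym reps_overlap mM aM bM ab XM.
have H12 := Ht _ _ (rep_mem c1) (rep_mem c2) (rep_neq c1 c2 C12).
have H34 := Ht _ _ (rep_mem c3) (rep_mem c4) (rep_neq c3 c4 C34).
by move: q12 q34; rewrite H12 H34 => ->.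
Qed.

End PrimeNode.

Lemma node_prime N : prime_node e N -> exists X, prime_set e X /\ #|X| = #|children e N|.
Proof.
move=> pN; have /card_gt0P[x0 _] : 0 < #|N| by case/and4P: pN => _ /ltnW.
by exists (reps N x0); split; [apply: reps_prime | apply: card_reps].
Qed.

Lemma k_modular_prime k : k_modular e k <-> forall X, prime_set e X -> #|X| <= k.
Proof.
split=> [Hk X pX | H N pN].
  by have [N [pN cX]] := prime_in_node pX; apply: leq_trans cX (Hk N pN).
by have [X [pX <-]] := node_prime pN; apply: H.
Qed.

End Decomposition.

Lemma prime_embed (T1 T2 : finType) (r : rel T1) (e : rel T2) (f : T1 -> T2) (X : {set T1}) :
  injective f -> (forall x y, r x y = e (f x) (f y)) ->
  prime_set r X -> prime_set e (f @: X).
Proof.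
move=> finj fE /prime_setP[cX HX]; apply/prime_setP; split; first by rewrite card_imset.
move=> M2 /rmoduleP[M2X H2] a2 b2 a2M b2M ab2.
set M1 := [set x in X | f x \in M2].
have m1 : rmodule r X M1.
  apply/rmoduleP; split; first by apply/subsetP => x; rewrite inE => /andP[].
  move=> x y z xX; rewrite !inE xX /= => xM /andP[_ yM] /andP[_ zM].
  by rewrite !fE; apply: H2; rewrite ?imset_f.
have [a1 a1X Ea] := imsetP (subsetP M2X a2 a2M).
have [b1 b1X Eb] := imsetP (subsetP M2X b2 b2M).
have XM1 : X \subset M1.
  apply: (HX _ m1 a1 b1); rewrite ?inE ?a1X ?b1X -?Ea -?Eb //.
  by apply: contra ab2 => /eqP E; rewrite Ea Eb E.
apply/subsetP => p /imsetP[x xX ->].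
by move: (subsetP XM1 x xX); rewrite inE => /andP[].
Qed.

Lemma prime_embed_inv (T1 T2 : finType) (r : rel T1) (e : rel T2) (f : T1 -> T2) (X : {set T1}) :
  injective f -> (forall x y, r x y = e (f x) (f y)) ->
  prime_set e (f @: X) -> prime_set r X.
Proof.
move=> finj fE /prime_setP[cX HX]; apply/prime_setP; split; first by rewrite card_imset in cX.
move=> M1 /rmoduleP[M1X H1] a b aM bM ab.
have m2 : rmodule e (f @: X) (f @: M1).
  apply/rmoduleP; split; first exact: imsetS.
  move=> p y2 z2 /imsetP[x xX ->]; rewrite mem_imset // => xM.
  by move=> /imsetP[y yM ->] /imsetP[z zM ->]; rewrite -!fE; exact: H1.
have := HX _ m2 (f a) (f b); rewrite !mem_imset // => /(_ aM bM).
rewrite (inj_eq finj) => /(_ ab) sub.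
by apply/subsetP => x xX; have := subsetP sub (f x); rewrite !mem_imset //; apply.
Qed.

Section Family.
Variable k : nat.

Definition graph_code := {n : 'I_(k + 4).+1 & {ffun 'I_n * 'I_n -> bool}}.

Definition code_rel (p : graph_code) : rel 'I_(tag p) := fun x y => tagged p (x, y).

Definition code_graph (p : graph_code) : sgraph := @FGraph (tag p) (@code_rel p).

Definition forbidden_code (p : graph_code) : bool :=
  [&& [forall x, forall y, @code_rel p x y == @code_rel p y x], [forall x, ~~ @code_rel p x x],
      prime_set (@code_rel p) setT & k < tag p].

Definition forbidden := {p : graph_code | forbidden_code p}.

Definition forbidden_graph (i : 'I_#|{: forbidden}|) : sgraph := code_graph (val (enum_val i)).

Lemma forbidden_simple p : forbidden_code p -> sgraph_simple (code_graph p).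
Proof.
case/and4P => /forallP Hs /forallP Hi _ _; split.
  by move=> x y; have := Hs x => /forallP/(_ y) /eqP.
by move=> x; apply/negbTE; apply: Hi.
Qed.

Lemma forbidden_prime (T : finType) (e : rel T) p : forbidden_code p ->
  contains_induced (code_graph p) e -> exists2 X, prime_set e X & k < #|X|.
Proof.
case/and4P => _ _ pS kS [f [finj fE]]; exists (f @: setT).
  exact: prime_embed finj fE pS.
by rewrite card_imset // cardsT card_ord.
Qed.

Lemma prime_forbidden (T : finType) (e : rel T) (Z : {set T}) : simple_graph e ->
  prime_set e Z -> k < #|Z| -> #|Z| <= k + 4 ->
  exists2 p, forbidden_code p & contains_induced (code_graph p) e.
Proof.
move=> [es ei] pZ kZ cZ.
pose n : 'I_(k + 4).+1 := Ordinal (cZ : #|Z| < (k + 4).+1).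
pose g : 'I_n -> T := fun i => enum_val (A := Z) i.
pose p : graph_code := existT _ n [ffun q => e (g q.1) (g q.2)].
have ginj : injective g by move=> x y /enum_val_inj.
have gim : g @: setT = Z.
  apply/setP => x; apply/imsetP/idP => [[i _ ->]|xZ]; first exact: enum_valP.
  by exists (enum_rank_in xZ x) => //; rewrite /g (enum_rankK_in xZ).
have gE (x y : 'I_n) : @code_rel p x y = e (g x) (g y) by rewrite /code_rel /= ffunE.
exists p; last by exists g.
apply/and4P; split => //.
- by apply/forallP => x; apply/forallP => y; rewrite !gE es.
- by apply/forallP => x; rewrite gE ei.
- by apply: (prime_embed_inv ginj gE); rewrite gim.
Qed.

End Family.

(* A graph is k-modular iff it has no prime set of more than k vertices, iff
   (by [prime_shrink]) none of k + 1 .. k + 4 vertices, iff it contains no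
   forbidden graph. *)
Theorem mainTheorem17 (k : nat) :
  exists (m : nat) (F : 'I_m -> sgraph),
    (forall i, sgraph_simple (F i)) /\
    forall (T : finType) (e : rel T), simple_graph e ->
      (k_modular e k <-> forall i, ~ contains_induced (F i) e).
Proof.
exists #|{: forbidden k}|, (@forbidden_graph k); split.
  by move=> i; apply: forbidden_simple; apply: (valP (enum_val i)).
move=> T e se; rewrite k_modular_prime; last by case: se.
split=> [H i /(forbidden_prime (valP (enum_val i)))[X pX kX] | H X pX].
  by move: (H X pX); rewrite leqNgt kX.
rewrite leqNgt; apply/negP => kX.
have [Z [_ pZ kZ cZ]] := prime_shrink (proj1 se) pX kX.
have [p fp [f fE]] := prime_forbidden se pZ kZ cZ.
apply: (H (enum_rank (exist _ p fp : forbidden k))).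
by rewrite /forbidden_graph enum_rankK; exists f.
Qed.
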